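(* Let $c,\ell,N\in\mathbb{N}_+$ and let the average pooling layer map $w^{i-1}=(w^{i-1}_1,\dots,w^{i-1}_{\ell N})$, $w^{i-1}_m\in\mathbb{R}^c$, to $w^i=(w^i_1,\dots,w^i_N)$ with $w^i_k=\frac{1}{\ell}\sum_{j=1}^{\ell}w^{i-1}_{\ell(k-1)+j}$. Let $\mu=1/\sqrt{\ell}$ and let $T\in\mathbb{S}^c$ be positive definite. Then for all inputs $w^{i-1}_a,w^{i-1}_b$ and every $k=1,\dots,N$, $$-(w^i_{a,k}-w^i_{b,k})^\top T(w^i_{a,k}-w^i_{b,k})+\mu^2\sum_{j=1}^{\ell}\big(w^{i-1}_{a,\ell(k-1)+j}-w^{i-1}_{b,\ell(k-1)+j}\big)^\top T\big(w^{i-1}_{a,\ell(k-1)+j}-w^{i-1}_{b,\ell(k-1)+j}\big)\ge 0.$$ Consequently, with $\underline{w}$ denoting the column-wise stacked vector, the layer satisfies $$\begin{bmatrix}\underline{w}_a^i-\underline{w}_b^i\\ \underline{w}_a^{i-1}-\underline{w}_b^{i-1}\end{bmatrix}^\top\begin{bmatrix}Q & 0\\ 0 & R\end{bmatrix}\begin{bmatrix}\underline{w}_a^i-\underline{w}_b^i\\ \underline{w}_a^{i-1}-\underline{w}_b^{i-1}\end{bmatrix}\ge0$$ for all inputs, with $Q=-\mathrm{blkdiag}(T,\dots,T)$ ($N$ blocks) and $R=\mu^2\mathrm{blkdiag}(T,\dots,T)$ ($\ell N$ blocks).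
   Context: $\mathbb{S}^c$ denotes the real symmetric $c\times c$ matrices. For a sequence $w=(w_1,\dots,w_M)$ of vectors in $\mathbb{R}^c$, the column-wise stacked vector is $\underline{w}=(w_1^\top,\dots,w_M^\top)^\top$. *)

From mathcomp Require Import all_boot all_order all_algebra.
Set Implicit Arguments. Unset Strict Implicit. Unset Printing Implicit Defensive.
Import Order.TTheory GRing.Theory Num.Theory.
Local Open Scope ring_scope.

Definition qform (R : ringType) (n : nat) (T : 'M[R]_n) (x : 'cV[R]_n) : R :=
  (x^T *m T *m x) 0 0.

Definition posdef (R : numDomainType) (n : nat) (T : 'M[R]_n) : Prop :=
  T^T = T /\ forall x : 'cV[R]_n, x != 0 -> 0 < qform T x.

Lemma pool_idx_proof (l N : nat) (k : 'I_N) (j : 'I_l) : (l * k + j < l * N)%N.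
Proof.
have hk := ltn_ord k; have hj := ltn_ord j.
apply: (@leq_trans (l * k.+1)); first by rewrite mulnS addnC ltn_add2r.
by rewrite leq_mul2l hk orbT.
Qed.

(* index l(k-1)+j (1-based) = l*k + j (0-based) *)
Definition pool_idx (l N : nat) (k : 'I_N) (j : 'I_l) : 'I_(l * N) :=
  Ordinal (pool_idx_proof k j).

Definition avgpool (R : fieldType) (c l N : nat) (w : 'I_(l * N) -> 'cV[R]_c)
  : 'I_N -> 'cV[R]_c :=
  fun k => (l%:R)^-1 *: \sum_(j < l) w (pool_idx k j).

(* decompose an index of 'I_(M*c) into (block, position) as in mxvec *)
Definition unpair (M c : nat) (p : 'I_(M * c)) : 'I_M * 'I_c :=
  enum_val (cast_ord (esym (mxvec_cast M c)) p).

(* column-wise stacked vector (w_1^T, ..., w_M^T)^T *)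
Definition stack (R : ringType) (M c : nat) (w : 'I_M -> 'cV[R]_c) : 'cV[R]_(M * c) :=
  (mxvec (\matrix_(m < M, j < c) w m j 0))^T.

Definition blkdiag (R : ringType) (M c : nat) (T : 'M[R]_c) : 'M[R]_(M * c) :=
  \matrix_(p, q) (if (unpair p).1 == (unpair q).1
                  then T (unpair p).2 (unpair q).2 else 0).

(* For positive semidefinite T the quadratic form q(x) = x^T T x is convex,
   and quantitatively, for vectors d_1, ..., d_l with mean m,
   sum_j q(d_j - m) = sum_j q(d_j) - l q(m) >= 0.
   Pooling is linear, so taking d_j = w_a - w_b on the j-th entry of block k
   gives q(w^i_{a,k} - w^i_{b,k}) <= (1/l) sum_j q(d_j), which is the
   blockwise inequality since mu^2 = 1/l.  The block-diagonal form splits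
   into a sum over the blocks k of exactly these quantities. *)

From mathcomp Require Import all_boot all_order all_algebra.
Set Implicit Arguments. Unset Strict Implicit. Unset Printing Implicit Defensive.
Import Order.TTheory GRing.Theory Num.Theory.
Local Open Scope ring_scope.

Section QuadraticForms.
Variable R : nzRingType.

Lemma qform_block_diag m n (A : 'M[R]_m) (D : 'M[R]_n) x y :
  qform (block_mx A 0 0 D) (col_mx x y) = qform A x + qform D y.
Proof.
by rewrite /qform tr_col_mx mul_row_block !mulmx0 addr0 add0r mul_row_col mxE.
Qed.

Lemma qformN n (A : 'M[R]_n) x : qform (- A) x = - qform A x.
Proof. by rewrite /qform mulmxN mulNmx mxE. Qed.

Lemma qform_sum n (A : 'M[R]_n) x :
  qform A x = \sum_i \sum_j x i 0 * A i j * x j 0.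
Proof.
rewrite /qform mxE exchange_big; apply: eq_bigr => j _.
by rewrite mxE mulr_suml; apply: eq_bigr => i _; rewrite !mxE.
Qed.

End QuadraticForms.

Section CommutativeQuadraticForms.
Variable R : comNzRingType.

Lemma qformZ n (A : 'M[R]_n) a x : qform (a *: A) x = a * qform A x.
Proof. by rewrite /qform -scalemxAr -scalemxAl mxE. Qed.

(* The mean [m] is specified by [\sum_j d j = l *: m], so no division is needed. *)
Lemma sum_qform_centered n (T : 'M[R]_n) l (d : 'I_l -> 'cV[R]_n) m :
  \sum_j d j = l%:R *: m ->
  \sum_j qform T (d j - m) = \sum_j qform T (d j) - l%:R * qform T m.
Proof.
move=> sum_d; have centered : \sum_j (d j - m) = 0.
  by rewrite sumrB sum_d sumr_const card_ord scaler_nat subrr.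
have expand : \sum_j (d j - m)^T *m T *m (d j - m)
    = \sum_j (d j)^T *m T *m d j - l%:R *: (m^T *m T *m m).
  under eq_bigr => j _ do rewrite mulmxBr.
  rewrite sumrB -!mulmx_suml -linear_sum /= centered trmx0 !mul0mx subr0.
  under eq_bigr => j _ do rewrite linearB /= !mulmxBl.
  by rewrite sumrB -mulmx_sumr sum_d -scalemxAr.
by rewrite /qform -!summxE expand !mxE.
Qed.

End CommutativeQuadraticForms.

Lemma posdef_qform_ge0 (R : numDomainType) n (T : 'M[R]_n) x :
  posdef T -> 0 <= qform T x.
Proof.
case=> _ T_pos; have [->|x_nz] := eqVneq x 0; last exact/ltW/T_pos.
by rewrite /qform mulmx0 mxE.
Qed.

Lemma qform_mean_le (R : numFieldType) n (T : 'M[R]_n) l (d : 'I_l -> 'cV[R]_n) :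
  (0 < l)%N -> (forall x, 0 <= qform T x) ->
  qform T (l%:R^-1 *: \sum_j d j) <= l%:R^-1 * \sum_j qform T (d j).
Proof.
move=> l_gt0 T_psd; set m := _ *: _.
have l_pos : 0 < l%:R :> R by rewrite ltr0n.
have sum_d : \sum_j d j = l%:R *: m by rewrite scalerA divff ?gt_eqF ?scale1r.
have : 0 <= \sum_j qform T (d j - m) by apply: sumr_ge0.
by rewrite sum_qform_centered // subr_ge0 ler_pdivlMl.
Qed.

Lemma big_mxvec_index (V : Type) (idx : V) (op : Monoid.com_law idx) M c
    (F : 'I_(M * c) -> V) :
  \big[op/idx]_p F p = \big[op/idx]_(m < M) \big[op/idx]_(i < c) F (mxvec_index m i).
Proof.
rewrite pair_bigA (reindex _ (curry_mxvec_bij M c)).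
by apply: eq_bigr => -[m i].
Qed.

Lemma pool_idx_bij l N : (0 < l)%N -> {on 'I_(l * N), bijective (uncurry (@pool_idx l N))}.
Proof.
move=> l_gt0.
have div_lt (p : 'I_(l * N)) : (p %/ l < N)%N by rewrite ltn_divLR // [(N * l)%N]mulnC.
have mod_lt (p : 'I_(l * N)) : (p %% l < l)%N by rewrite ltn_pmod.
exists (fun p => (Ordinal (div_lt p), Ordinal (mod_lt p))) => [[k j] _ | p _] /=.
  congr pair; apply: val_inj => /=; rewrite mulnC.
    by rewrite divnMDl // divn_small // addn0.
  by rewrite modnMDl modn_small.
by apply: val_inj => /=; rewrite mulnC -divn_eq.
Qed.

Lemma big_pool_idx (V : Type) (idx : V) (op : Monoid.com_law idx) l N
    (F : 'I_(l * N) -> V) :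
  (0 < l)%N ->
  \big[op/idx]_p F p = \big[op/idx]_(k < N) \big[op/idx]_(j < l) F (pool_idx k j).
Proof.
move=> l_gt0; rewrite pair_bigA (reindex _ (pool_idx_bij N l_gt0)).
by apply: eq_bigr => -[k j].
Qed.

Section StackedVectors.
Variable R : nzRingType.

Lemma stack_mxvec_index M c (w : 'I_M -> 'cV[R]_c) m i :
  stack w (mxvec_index m i) 0 = w m i 0.
Proof. by rewrite /stack mxE mxvecE mxE. Qed.

Lemma stackB M c (w v : 'I_M -> 'cV[R]_c) :
  stack w - stack v = stack (fun m => w m - v m).
Proof. by apply/matrixP => p i; rewrite /stack !(mxE, castmxE). Qed.

Lemma unpair_mxvec_index M c (m : 'I_M) (i : 'I_c) : unpair (mxvec_index m i) = (m, i).
Proof. by rewrite /unpair cast_ordK enum_rankK. Qed.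

Lemma blkdiag_mxvec_index M c (T : 'M[R]_c) m i m' j :
  blkdiag M T (mxvec_index m i) (mxvec_index m' j) = if m == m' then T i j else 0.
Proof. by rewrite mxE !unpair_mxvec_index. Qed.

Lemma qform_blkdiag_stack M c (T : 'M[R]_c) (w : 'I_M -> 'cV[R]_c) :
  qform (blkdiag M T) (stack w) = \sum_m qform T (w m).
Proof.
rewrite qform_sum big_mxvec_index; apply: eq_bigr => m _.
rewrite qform_sum; apply: eq_bigr => i _.
rewrite big_mxvec_index (bigD1 m) //= [X in _ + X]big1 ?addr0 => [|m' m'_neq].
  by apply: eq_bigr => j _; rewrite !stack_mxvec_index blkdiag_mxvec_index eqxx.
apply: big1 => j _.
by rewrite blkdiag_mxvec_index eq_sym (negbTE m'_neq) mulr0 mul0r.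
Qed.

End StackedVectors.

Unset Implicit Arguments.
Theorem lemma8 (R : rcfType) (c l N : nat) (hc : (0 < c)%N) (hl : (0 < l)%N)
  (hN : (0 < N)%N) (T : 'M[R]_c) (hT : posdef T)
  (wa wb : 'I_(l * N) -> 'cV[R]_c) :
  let mu := (Num.sqrt (l%:R : R))^-1 in
  (forall k : 'I_N,
     0 <= - qform T (avgpool wa k - avgpool wb k)
          + mu ^+ 2 * \sum_(j < l) qform T (wa (pool_idx k j) - wb (pool_idx k j)))
  /\
  0 <= qform (block_mx (- blkdiag N T) 0 0 (mu ^+ 2 *: blkdiag (l * N) T))
             (col_mx (stack (avgpool wa) - stack (avgpool wb)) (stack wa - stack wb)).
Proof.
move=> mu; have mu2 : mu ^+ 2 = l%:R^-1 by rewrite exprVn sqr_sqrtr ?ler0n.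
have pool_block k : 0 <= - qform T (avgpool wa k - avgpool wb k)
    + mu ^+ 2 * \sum_(j < l) qform T (wa (pool_idx k j) - wb (pool_idx k j)).
  rewrite mu2 addrC subr_ge0 /avgpool -scalerBr -sumrB.
  by apply: qform_mean_le => // x; apply: posdef_qform_ge0.
split=> //.
rewrite qform_block_diag qformN qformZ !stackB !qform_blkdiag_stack.
rewrite big_pool_idx // mulr_sumr -sumrN -big_split /=.
by apply: sumr_ge0 => k _; apply: pool_block.
Qed.
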